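(* For any connected graphs $G$ and $H$, $v_s(G)\,v_s(H) \le \gamma_P(G \Box H)$. In addition, if $\gamma_P(G) = v_s(G)$ and $\gamma_P(H) = v_s(H)$, then $\gamma_P(G)\gamma_P(H) \le \gamma_P(G \Box H)$.
   Context: A strong support vertex of a graph is a vertex adjacent to at least two leaves (vertices of degree $1$); $v_s(G)$ denotes the number of strong support vertices of $G$. For $S \subseteq V(G)$: initially all vertices of $S$ and their neighbors are observed; then, repeatedly, any vertex that is the only unobserved neighbor of some observed vertex becomes observed. $S$ is a power dominating set if eventually all vertices are observed; $\gamma_P(G)$ is the minimum size of a power dominating set. $G\Box H$ denotes the Cartesian product: vertex set $V(G)\times V(H)$, with $(g_1,h_1)\sim(g_2,h_2)$ iff ($g_1=g_2$ and $h_1h_2\in E(H)$) or ($h_1=h_2$ and $g_1g_2\in E(G)$). *)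

From mathcomp Require Import all_boot.
Set Implicit Arguments. Unset Strict Implicit. Unset Printing Implicit Defensive.

Definition simple_graph (T : finType) (e : rel T) : Prop :=
  symmetric e /\ irreflexive e.

Definition connected_graph (T : finType) (e : rel T) : Prop :=
  forall x y : T, connect e x y.

Definition nbhd (T : finType) (e : rel T) (v : T) : {set T} := [set u | e v u].
Definition deg (T : finType) (e : rel T) (v : T) : nat := #|nbhd e v|.
Definition leaf (T : finType) (e : rel T) (v : T) : bool := deg e v == 1.

Definition strong_support (T : finType) (e : rel T) (v : T) : bool :=
  2 <= #|[set u | e v u & leaf e u]|.

Definition v_s (T : finType) (e : rel T) : nat := #|[set v | strong_support e v]|.

Definition closed_nbhd (T : finType) (e : rel T) (S : {set T}) : {set T} :=
  S :|: [set v | [exists u in S, e u v]].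

(* X is stable under the propagation rule: no observed vertex has exactly one
   unobserved neighbour *)
Definition prop_closed (T : finType) (e : rel T) (X : {set T}) : bool :=
  [forall u in X, #|[set w | e u w & w \notin X]| != 1].

(* The set finally observed from S is the least set containing N[S] and
   closed under propagation; S is power dominating iff this set is all of T. *)
Definition power_dominating (T : finType) (e : rel T) (S : {set T}) : bool :=
  [forall X : {set T},
     (closed_nbhd e S \subset X) && prop_closed e X ==> (X == setT)].

(* power domination number (setT is always power dominating, so the minimum
   is attained; #|T| is a harmless upper default) *)
Definition gammaP (T : finType) (e : rel T) : nat :=
  \big[minn/#|T|]_(S : {set T} | power_dominating e S) #|S|.

Definition cart_prod (T1 T2 : finType) (e1 : rel T1) (e2 : rel T2) : rel (T1 * T2) :=
  fun x y => ((x.1 == y.1) && e2 x.2 y.2) || ((x.2 == y.2) && e1 x.1 y.1).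

From mathcomp Require Import all_boot.
Set Implicit Arguments. Unset Strict Implicit. Unset Printing Implicit Defensive.

(* For a strong support vertex g, let L(g) be its set of pendant leaves and
   B(g) = {g} u L(g) its star.  If a set S of vertices of G [] H misses
   B(g) x B(h), then the complement of L(g) x L(h) contains N[S] and is closed
   under propagation: a vertex outside L(g) x L(h) with a neighbour (a, b)
   inside must be (a, h) or (g, b), and such a vertex sees at least two
   leaf pairs.  Hence a power dominating set meets every B(g) x B(h); since a
   leaf has a single neighbour, the stars are pairwise disjoint, and
   projecting each vertex to the centre of its star gives
   v_s(G) v_s(H) <= |S|. *)

Lemma power_dominatingP (T : finType) (e : rel T) (S X : {set T}) :
  power_dominating e S -> closed_nbhd e S \subset X -> prop_closed e X ->
  X = setT.
Proof.
by move=> /forallP /(_ X) /implyP pdS NX cX; apply/eqP/pdS; rewrite NX.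
Qed.

Lemma power_dominatingT (T : finType) (e : rel T) : power_dominating e setT.
Proof.
apply/forallP => X; apply/implyP => /andP [NX _].
by rewrite eqEsubset subsetT; apply: subset_trans NX; apply: subsetUl.
Qed.

Lemma gammaP_ge (T : finType) (e : rel T) (n : nat) :
  (forall S, power_dominating e S -> n <= #|S|) -> n <= gammaP e.
Proof.
move=> ge_n; apply: (big_ind (fun m => n <= m)) => //.
- by rewrite -cardsT; apply/ge_n/power_dominatingT.
- by move=> a b na nb; rewrite leq_min na nb.
Qed.

Section Stars.
Variables (T : finType) (e : rel T).

Definition pendants (g : T) : {set T} := [set u | e g u & leaf e u].
Definition star (g : T) : {set T} := g |: pendants g.

Lemma leaf_nbr_uniq m a b : leaf e m -> e m a -> e m b -> a = b.
Proof.
rewrite /leaf /deg => /cards1P [z Nm] ma mb.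
have : a \in nbhd e m by rewrite inE.
have : b \in nbhd e m by rewrite inE.
by rewrite Nm !inE => /eqP -> /eqP ->.
Qed.

Lemma leaf_not_strong_support x : leaf e x -> ~~ strong_support e x.
Proof.
rewrite /leaf /strong_support -ltnNge ltnS => /eqP <-.
by apply/subset_leq_card/subsetP => u; rewrite !inE => /andP [].
Qed.

Hypothesis e_sym : symmetric e.

Lemma pendantP g u : u \in pendants g -> e u g /\ leaf e u.
Proof. by rewrite inE e_sym => /andP. Qed.

Lemma pendant_nbr_eq g u v : u \in pendants g -> e v u -> v = g.
Proof.
by move=> /pendantP [ug lu] vu; apply: (leaf_nbr_uniq lu); rewrite // e_sym.
Qed.

Definition star_centre (x : T) : T :=
  if strong_support e x then x else odflt x [pick y | e x y].

Lemma star_centreE g x :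
  strong_support e g -> x \in star g -> star_centre x = g.
Proof.
rewrite /star_centre => sg; rewrite in_setU1 => /orP [/eqP -> | xL].
  by rewrite sg.
have [xg lx] := pendantP xL.
rewrite (negbTE (leaf_not_strong_support lx)).
case: pickP => [y xy | no_nbr] /=; first exact: (leaf_nbr_uniq lx).
by have := no_nbr g; rewrite xg.
Qed.

End Stars.

Section StarPairs.
Variables (T1 T2 : finType) (e1 : rel T1) (e2 : rel T2).
Hypotheses (e1_sym : symmetric e1) (e2_sym : symmetric e2).
Variables (g : T1) (h : T2).
Hypotheses (sg : strong_support e1 g) (sh : strong_support e2 h).

Let GH := cart_prod e1 e2.
Let L := setX (pendants e1 g) (pendants e2 h).

Lemma prop_closed_pendant_pairC : prop_closed GH (~: L).
Proof.
apply/forall_inP => [[x y]] _; apply/negP => /eqP one_nbr.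
have [[a b]] : exists w, w \in [set w | GH (x, y) w & w \notin ~: L].
  by apply/card_gt0P; rewrite one_nbr.
rewrite in_set in_setC negbK in_setX /GH /cart_prod /=.
move=> /andP [+ /andP [aL bL]].
case/orP => [/andP [/eqP xa yb] | /andP [/eqP yb xa]].
- have yh : y = h := pendant_nbr_eq e2_sym bL yb.
  have : #|pair x @: pendants e2 h| <= 1.
    rewrite -one_nbr; apply/subset_leq_card/subsetP => _ /imsetP [m mL ->].
    have [mh _] := pendantP e2_sym mL.
    rewrite in_set in_setC negbK in_setX /GH /cart_prod /=.
    by rewrite eqxx yh e2_sym mh xa aL mL.
  by rewrite card_imset => [/(leq_trans sh) | ? ? []].
- have xg : x = g := pendant_nbr_eq e1_sym aL xa.
  have : #|(fun l => (l, y)) @: pendants e1 g| <= 1.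
    rewrite -one_nbr; apply/subset_leq_card/subsetP => _ /imsetP [l lL ->].
    have [lg _] := pendantP e1_sym lL.
    rewrite in_set in_setC negbK in_setX /GH /cart_prod /=.
    by rewrite eqxx xg e1_sym lg yb bL lL orbT.
  by rewrite card_imset => [/(leq_trans sg) | ? ? []].
Qed.

Lemma closed_nbhd_pendant_pairC (S : {set T1 * T2}) :
  [disjoint S & setX (star e1 g) (star e2 h)] -> closed_nbhd GH S \subset ~: L.
Proof.
move=> S_B; apply/subsetP => -[x y].
rewrite /closed_nbhd in_setU in_set in_setC in_setX.
case/orP => [xyS | /exists_inP [[u v] uvS]].
  apply: contraFN (disjointFr S_B xyS) => /andP [xL yL].
  by rewrite in_setX !in_setU1 xL yL !orbT.
rewrite /GH /cart_prod /= => uv; apply: contraFN (disjointFr S_B uvS).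
move=> /andP [xL yL]; rewrite in_setX !in_setU1.
case/orP: uv => [/andP [/eqP -> vy] | /andP [/eqP -> ux]].
- by rewrite (pendant_nbr_eq e2_sym yL vy) xL eqxx !orbT.
- by rewrite (pendant_nbr_eq e1_sym xL ux) yL eqxx !orbT.
Qed.

Lemma power_dominating_meets_star_pair (S : {set T1 * T2}) :
  power_dominating GH S ->
  exists2 x, x \in S & x \in setX (star e1 g) (star e2 h).
Proof.
move=> pdS; have /set0Pn [x] : S :&: setX (star e1 g) (star e2 h) != set0.
  rewrite setI_eq0; apply/negP => S_B.
  have [l lL] : exists l, l \in pendants e1 g by apply/card_gt0P; apply: ltnW.
  have [m mL] : exists m, m \in pendants e2 h by apply/card_gt0P; apply: ltnW.
  have LC_full := power_dominatingP pdS (closed_nbhd_pendant_pairC S_B)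
    prop_closed_pendant_pairC.
  by have := in_setT (l, m); rewrite -LC_full in_setC in_setX lL mL.
by rewrite in_setI => /andP [xS xB]; exists x.
Qed.

End StarPairs.

Lemma power_dominating_card_ge (T1 T2 : finType) (e1 : rel T1) (e2 : rel T2)
    (S : {set T1 * T2}) :
  symmetric e1 -> symmetric e2 ->
  power_dominating (cart_prod e1 e2) S -> v_s e1 * v_s e2 <= #|S|.
Proof.
move=> e1_sym e2_sym pdS; rewrite /v_s -cardsX.
pose centres x := (star_centre e1 x.1, star_centre e2 x.2).
apply: leq_trans (leq_imset_card centres S).
apply/subset_leq_card/subsetP => -[g h]; rewrite in_setX !inE => /andP [sg sh].
have [[x y] xyS] := power_dominating_meets_star_pair e1_sym e2_sym sg sh pdS.
rewrite in_setX => /andP [xg yh]; apply/imsetP; exists (x, y) => //.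
by rewrite /centres (star_centreE e1_sym sg xg) (star_centreE e2_sym sh yh).
Qed.

Theorem lemma3p5 (T1 T2 : finType) (e1 : rel T1) (e2 : rel T2) :
  simple_graph e1 -> simple_graph e2 ->
  connected_graph e1 -> connected_graph e2 ->
  v_s e1 * v_s e2 <= gammaP (cart_prod e1 e2) /\
  (gammaP e1 = v_s e1 -> gammaP e2 = v_s e2 ->
   gammaP e1 * gammaP e2 <= gammaP (cart_prod e1 e2)).
Proof.
move=> [e1_sym _] [e2_sym _] _ _.
have vs_le : v_s e1 * v_s e2 <= gammaP (cart_prod e1 e2).
  by apply: gammaP_ge => S; apply: power_dominating_card_ge.
by split => // -> ->.
Qed.
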